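(* Let $k\ge1$, $-\frac{\pi}{2}\le\theta_1<\theta_2<\dots<\theta_{k+1}\le\frac{\pi}{2}$ and $\theta_{\min}=\min_{p\ne j}|\theta_p-\theta_j|$. Then $$\min_{\hat\theta_1,\dots,\hat\theta_k\in\mathbb R}\|\eta_{k+1,k}(\theta_1,\dots,\theta_{k+1},\hat\theta_1,\dots,\hat\theta_k)\|_\infty\ge\xi(k)\,\theta_{\min}^k.$$
   Context: For $z_1,\dots,z_p,\hat z_1,\dots,\hat z_q\in\mathbb C$, $\eta_{p,q}(z_1,\dots,z_p,\hat z_1,\dots,\hat z_q)\in\mathbb R^p$ is the vector whose $j$-th entry is $\prod_{l=1}^q|z_j-\hat z_l|$. For an integer $k\ge1$: $\xi(1)=\frac12$; $\xi(k)=\frac{(\frac{k-1}{2})!(\frac{k-3}{2})!}{4}$ if $k\ge3$ is odd; $\xi(k)=\frac{((\frac{k-2}{2})!)^2}{4}$ if $k$ is even. *)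

From Stdlib Require Import Reals Lra Lia List Arith.
Import ListNotations.
Open Scope R_scope.

Definition Rprod_list (l : list R) : R := fold_right Rmult 1 l.

(* The sup-norm of eta_{p,q}(z_1..z_p, zh_1..zh_q), for real inputs
   z_j = z (j-1) (j = 1..p) and zh_l = zh (l-1) (l = 1..q):
   max_j prod_l |z_j - zh_l|.  Entries are >= 0 so 0 is a valid seed for max. *)
Definition eta_inf (p q : nat) (z zh : nat -> R) : R :=
  fold_right Rmax 0
    (map (fun j => Rprod_list (map (fun l => Rabs (z j - zh l)) (seq 0 q)))
         (seq 0 p)).

(* theta_min = min_{p <> j} |theta_p - theta_j| over indices 0..n-1.
   Seed |th 0 - th 1| belongs to the list whenever n >= 2. *)
Definition theta_min (n : nat) (th : nat -> R) : R :=
  fold_right Rmin (Rabs (th 0%nat - th 1%nat))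
    (flat_map (fun p =>
       map (fun j => Rabs (th p - th j))
           (filter (fun j => negb (Nat.eqb p j)) (seq 0 n)))
     (seq 0 n)).

Definition xi (k : nat) : R :=
  if Nat.eqb k 1 then 1 / 2
  else if Nat.even k then (INR (fact ((k - 2) / 2))) ^ 2 / 4
  else INR (fact ((k - 1) / 2)) * INR (fact ((k - 3) / 2)) / 4.

(* The k-th divided difference of the monic polynomial prod_l (t - ht_l) of
   degree k at the nodes th_0 < ... < th_k equals its leading coefficient 1.
   On the other hand a k-th divided difference over nodes with consecutive
   gaps at least d is at most 2^k max_j |f(th_j)| / (k! d^k), by induction on
   k through its recursive definition.  Hence the sup-norm of eta is at least
   k!/2^k * theta_min^k, and xi(k) <= k!/2^k. *)

From Stdlib Require Import Reals Lra Lia List Arith.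
Open Scope R_scope.

Lemma pow4_fact_sqr_le_fact_double (m : nat) :
  (4 ^ m * (fact m * fact m) <= fact (2 * m + 2))%nat.
Proof.
  induction m as [|m IH]; [simpl; lia|].
  replace (2 * S m + 2)%nat with (S (S (2 * m + 2))) by lia.
  cbn [fact]; rewrite Nat.pow_succ_r'.
  assert (4 * (S m * S m) <= S (S (2 * m + 2)) * S (2 * m + 2))%nat by nia.
  nia.
Qed.

Lemma pow4_fact_sqr_le_fact_double_R (m : nat) :
  4 ^ m * (INR (fact m) * INR (fact m)) <= INR (fact (2 * m + 2)).
Proof.
  pose proof (le_INR _ _ (pow4_fact_sqr_le_fact_double m)) as H.
  rewrite !mult_INR, pow_INR in H.
  now replace (INR 4) with 4 in H by (simpl; lra).
Qed.

Lemma xi_even (m : nat) : xi (2 * m + 2) = INR (fact m) ^ 2 / 4.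
Proof.
  unfold xi.
  replace (Nat.eqb (2 * m + 2) 1) with false by (symmetry; apply Nat.eqb_neq; lia).
  replace (2 * m + 2)%nat with (2 * S m)%nat by lia.
  rewrite Nat.even_even.
  replace ((2 * S m - 2) / 2)%nat with m; [reflexivity|].
  replace (2 * S m - 2)%nat with (m * 2)%nat by lia.
  now rewrite Nat.div_mul.
Qed.

Lemma xi_odd (m : nat) : xi (2 * m + 3) = INR (fact (S m)) * INR (fact m) / 4.
Proof.
  unfold xi.
  replace (Nat.eqb (2 * m + 3) 1) with false by (symmetry; apply Nat.eqb_neq; lia).
  replace (2 * m + 3)%nat with (2 * S m + 1)%nat by lia.
  rewrite Nat.even_odd.
  replace ((2 * S m + 1 - 1) / 2)%nat with (S m)
    by (replace (2 * S m + 1 - 1)%nat with (S m * 2)%nat by lia; now rewrite Nat.div_mul).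
  replace ((2 * S m + 1 - 3) / 2)%nat with m
    by (replace (2 * S m + 1 - 3)%nat with (m * 2)%nat by lia; now rewrite Nat.div_mul).
  reflexivity.
Qed.

Lemma pow2_double (m : nat) : 2 ^ (2 * m) = 4 ^ m.
Proof. rewrite pow_mult; f_equal; ring. Qed.

Lemma xi_mul_pow2_le_fact (k : nat) : (1 <= k)%nat -> xi k * 2 ^ k <= INR (fact k).
Proof.
  intros hk.
  destruct (Nat.Even_or_Odd k) as [[m ->]|[[|m] ->]]; [| unfold xi; simpl; lra |].
  - destruct m as [|m]; [lia|].
    replace (2 * S m)%nat with (2 * m + 2)%nat by lia.
    rewrite (xi_even m), pow_add, pow2_double.
    replace (INR (fact m) ^ 2 / 4 * (4 ^ m * 2 ^ 2))
      with (4 ^ m * (INR (fact m) * INR (fact m))) by field.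
    apply pow4_fact_sqr_le_fact_double_R.
  - replace (2 * S m + 1)%nat with (2 * m + 3)%nat by lia.
    rewrite (xi_odd m), pow_add, pow2_double.
    replace (2 * m + 3)%nat with (S (2 * m + 2)) by lia.
    cbn [fact]; rewrite !mult_INR, !S_INR, plus_INR, mult_INR.
    pose proof (pow4_fact_sqr_le_fact_double_R m).
    assert (0 <= INR m) by apply pos_INR.
    assert (0 <= 4 ^ m * (INR (fact m) * INR (fact m)))
      by (apply Rmult_le_pos; [apply pow_le; lra | apply Rmult_le_pos; apply pos_INR]).
    replace ((INR m + 1) * INR (fact m) * INR (fact m) / 4 * (4 ^ m * 2 ^ 3))
      with (2 * (INR m + 1) * (4 ^ m * (INR (fact m) * INR (fact m)))) by field.
    simpl (INR 2); nra.
Qed.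

(* [divdiff x f i n] is the divided difference f[x_i, ..., x_(i+n)]. *)
Fixpoint divdiff (x : nat -> R) (f : R -> R) (i n : nat) : R :=
  match n with
  | O => f (x i)
  | S n' => (divdiff x f (S i) n' - divdiff x f i n') / (x (i + S n')%nat - x i)
  end.

Lemma divdiff_S (x : nat -> R) (f : R -> R) (i n : nat) :
  divdiff x f i (S n)
  = (divdiff x f (S i) n - divdiff x f i n) / (x (i + S n)%nat - x i).
Proof. reflexivity. Qed.

Fixpoint root_prod (h : nat -> R) (m : nat) (t : R) : R :=
  match m with
  | O => 1
  | S m' => (t - h m') * root_prod h m' t
  end.

Section DividedDifferences.

Variable x : nat -> R.
Variable K : nat.
Hypothesis x_incr : forall i, (i < K)%nat -> x i < x (S i).

Lemma nodes_lt a b : (a < b)%nat -> (b <= K)%nat -> x a < x b.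
Proof.
  intros hab; induction b as [|b IH]; [lia|]; intros hb.
  destruct (Nat.eq_dec a b) as [->|hne]; [now apply x_incr|].
  apply Rlt_trans with (x b); [apply IH|apply x_incr]; lia.
Qed.

Lemma divdiff_const (f : R -> R) (c : R) :
  (forall t, f t = c) -> forall n i, divdiff x f i (S n) = 0.
Proof.
  intros hf; induction n as [|n IH]; intros i; rewrite divdiff_S.
  - cbn [divdiff]; rewrite !hf; unfold Rdiv; ring.
  - rewrite !IH; unfold Rdiv; ring.
Qed.

Lemma divdiff_leibniz_linear (f g : R -> R) (h : R) :
  (forall t, f t = (t - h) * g t) ->
  forall n i, (i + S n <= K)%nat ->
  divdiff x f i (S n) = (x i - h) * divdiff x g i (S n) + divdiff x g (S i) n.
Proof.
  intros hf; induction n as [|n IH]; intros i hi.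
  - cbn [divdiff]; rewrite !hf; replace (i + 1)%nat with (S i) by lia.
    assert (x i < x (S i)) by (apply x_incr; lia).
    field; lra.
  - rewrite (divdiff_S x f), (divdiff_S x g i), (IH (S i)), (IH i) by lia.
    assert (hshift : divdiff x g (S i) (S n) * (x (i + S (S n))%nat - x (S i))
                     = divdiff x g (S (S i)) n - divdiff x g (S i) n).
    { rewrite (divdiff_S x g (S i)); replace (S i + S n)%nat with (i + S (S n))%nat by lia.
      assert (x (S i) < x (i + S (S n))%nat) by (apply nodes_lt; lia).
      field; lra. }
    assert (x i < x (i + S (S n))%nat) by (apply nodes_lt; lia).
    apply Rmult_eq_reg_r with (x (i + S (S n))%nat - x i); [|lra].
    replace (divdiff x g (S (S i)) n)
      with (divdiff x g (S i) (S n) * (x (i + S (S n))%nat - x (S i))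
            + divdiff x g (S i) n) by lra.
    field; lra.
Qed.

Lemma divdiff_root_prod (h : nat -> R) :
  forall m n i, (i + n <= K)%nat -> (m <= n)%nat ->
  divdiff x (root_prod h m) i n = if Nat.eq_dec m n then 1 else 0.
Proof.
  induction m as [|m IH]; intros n i hi hmn.
  - destruct n as [|n]; [reflexivity|].
    now rewrite (divdiff_const _ 1).
  - destruct n as [|n]; [lia|].
    rewrite (divdiff_leibniz_linear (root_prod h (S m)) (root_prod h m) (h m)) by (reflexivity || lia).
    rewrite (IH (S n) i), (IH n (S i)) by lia.
    destruct (Nat.eq_dec m (S n)); [lia|].
    destruct (Nat.eq_dec m n), (Nat.eq_dec (S m) (S n)); try lia; ring.
Qed.

Variable d : R.
Hypothesis d_ge0 : 0 <= d.
Hypothesis d_le_gap : forall j, (j < K)%nat -> d <= x (S j) - x j.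

Lemma nodes_spread n i : (i + n <= K)%nat -> INR n * d <= x (i + n)%nat - x i.
Proof.
  induction n as [|n IH]; intros hi.
  - rewrite Nat.add_0_r; simpl; lra.
  - rewrite S_INR; replace (i + S n)%nat with (S (i + n)) by lia.
    pose proof (IH ltac:(lia)); pose proof (d_le_gap (i + n) ltac:(lia)); lra.
Qed.

Lemma divdiff_abs_bound (f : R -> R) (M : R) :
  forall n i, (i + n <= K)%nat ->
  (forall j, (i <= j <= i + n)%nat -> Rabs (f (x j)) <= M) ->
  Rabs (divdiff x f i n) * INR (fact n) * d ^ n <= M * 2 ^ n.
Proof.
  induction n as [|n IH]; intros i hi hM.
  - simpl; rewrite !Rmult_1_r; apply hM; lia.
  - pose proof (IH (S i) ltac:(lia) ltac:(intros j hj; apply hM; lia)) as hA.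
    pose proof (IH i ltac:(lia) ltac:(intros j hj; apply hM; lia)) as hB.
    set (A := divdiff x f (S i) n) in *; set (B := divdiff x f i n) in *.
    set (D := x (i + S n)%nat - x i).
    set (c := INR (fact n) * d ^ n).
    assert (hD : INR (S n) * d <= D) by (apply nodes_spread; lia).
    assert (hDpos : 0 < D) by (assert (x i < x (i + S n)%nat) by (apply nodes_lt; lia); unfold D; lra).
    assert (hquot : Rabs ((A - B) / D) * INR (S n) * d <= Rabs (A - B)).
    { assert (hr : Rabs ((A - B) / D) * D = Rabs (A - B)).
      { unfold Rdiv; rewrite Rabs_mult, Rabs_inv, (Rabs_pos_eq D) by lra; field; lra. }
      pose proof (Rabs_pos ((A - B) / D)); nra. }
    assert (hc : 0 <= c) by (apply Rmult_le_pos; [apply pos_INR|apply pow_le; lra]).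
    assert (htri : Rabs (A - B) <= Rabs A + Rabs B)
      by (rewrite <- (Rabs_Ropp B); apply Rabs_triang).
    rewrite divdiff_S; fold A B D.
    change (fact (S n)) with (S n * fact n)%nat.
    rewrite mult_INR, <- tech_pow_Rmult.
    replace (Rabs ((A - B) / D) * (INR (S n) * INR (fact n)) * (d * d ^ n))
      with (Rabs ((A - B) / D) * INR (S n) * d * c) by (unfold c; ring).
    rewrite Rmult_assoc in hA, hB; fold c in hA, hB; simpl (2 ^ S n).
    apply Rle_trans with (Rabs (A - B) * c); [now apply Rmult_le_compat_r|].
    nra.
Qed.

End DividedDifferences.

Lemma fold_right_Rmax_ge (l : list R) (y : R) : In y l -> y <= fold_right Rmax 0 l.
Proof.
  induction l as [|a l IH]; simpl; [tauto|]; intros [<-|hy].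
  - apply Rmax_l.
  - apply Rle_trans with (fold_right Rmax 0 l); [now apply IH|apply Rmax_r].
Qed.

Lemma fold_right_Rmin_le (l : list R) (s y : R) : In y l -> fold_right Rmin s l <= y.
Proof.
  induction l as [|a l IH]; simpl; [tauto|]; intros [<-|hy].
  - apply Rmin_l.
  - apply Rle_trans with (fold_right Rmin s l); [apply Rmin_r|now apply IH].
Qed.

Lemma fold_right_Rmin_ge0 (l : list R) (s : R) :
  0 <= s -> (forall y, In y l -> 0 <= y) -> 0 <= fold_right Rmin s l.
Proof.
  induction l as [|a l IH]; simpl; intros hs hl; [exact hs|].
  apply Rmin_glb; [apply hl|apply IH]; auto.
Qed.

Lemma fold_right_Rmult_init (c : R) (l : list R) :
  fold_right Rmult c l = c * fold_right Rmult 1 l.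
Proof. induction l as [|a l IH]; simpl; [ring|rewrite IH; ring]. Qed.

Lemma Rprod_list_abs_sub (h : nat -> R) (t : R) m :
  Rprod_list (map (fun l => Rabs (t - h l)) (seq 0 m)) = Rabs (root_prod h m t).
Proof.
  induction m as [|m IH]; [simpl; now rewrite Rabs_R1|].
  rewrite seq_S, map_app; unfold Rprod_list in *; rewrite fold_right_app.
  cbn [map fold_right root_prod]; rewrite fold_right_Rmult_init, IH, Rabs_mult.
  simpl (0 + m)%nat; ring.
Qed.

Lemma eta_inf_ge_root_prod (k : nat) (th ht : nat -> R) (j : nat) : (j <= k)%nat ->
  Rabs (root_prod ht k (th j)) <= eta_inf (S k) k th ht.
Proof.
  intros hj; unfold eta_inf; apply fold_right_Rmax_ge.
  rewrite <- Rprod_list_abs_sub; apply in_map_iff.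
  exists j; split; [reflexivity|apply in_seq; lia].
Qed.

Lemma theta_min_ge0 (n : nat) (th : nat -> R) : 0 <= theta_min n th.
Proof.
  apply fold_right_Rmin_ge0; [apply Rabs_pos|]; intros y hy.
  apply in_flat_map in hy as [p [_ hy]]; apply in_map_iff in hy as [j [<- _]].
  apply Rabs_pos.
Qed.

Lemma theta_min_le_gap (k : nat) (th : nat -> R) (j : nat) : (j < k)%nat ->
  theta_min (S k) th <= Rabs (th j - th (S j)).
Proof.
  intros hj; apply fold_right_Rmin_le, in_flat_map.
  exists j; split; [apply in_seq; lia|].
  apply in_map_iff; exists (S j); split; [reflexivity|].
  apply filter_In; split; [apply in_seq; lia|].
  now replace (Nat.eqb j (S j)) with false by (symmetry; apply Nat.eqb_neq; lia).
Qed.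

Theorem lemma3p6 (k : nat) (hk : (1 <= k)%nat) (th : nat -> R)
  (hinc : forall i : nat, (i < k)%nat -> th i < th (S i))
  (hlo : - (PI / 2) <= th 0%nat) (hhi : th k <= PI / 2) :
  forall ht : nat -> R,
    xi k * (theta_min (S k) th) ^ k <= eta_inf (S k) k th ht.
Proof.
  intros ht.
  set (d := theta_min (S k) th).
  assert (hd0 : 0 <= d) by apply theta_min_ge0.
  assert (hgap : forall j, (j < k)%nat -> d <= th (S j) - th j).
  { intros j hj; pose proof (theta_min_le_gap k th j hj); pose proof (hinc j hj).
    rewrite Rabs_minus_sym, Rabs_pos_eq in * by lra; assumption. }
  assert (hlead : divdiff th (root_prod ht k) 0 k = 1).
  { rewrite (divdiff_root_prod th k hinc ht k k 0) by lia.
    now destruct (Nat.eq_dec k k). }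
  pose proof (divdiff_abs_bound th k hinc d hd0 hgap (root_prod ht k)
                (eta_inf (S k) k th ht) k 0 ltac:(lia)
                ltac:(intros j hj; apply eta_inf_ge_root_prod; lia)) as hbound.
  rewrite hlead, Rabs_R1, Rmult_1_l in hbound.
  pose proof (xi_mul_pow2_le_fact k hk).
  assert (0 < 2 ^ k) by (apply pow_lt; lra).
  assert (0 <= d ^ k) by (apply pow_le; lra).
  apply Rmult_le_reg_r with (2 ^ k); [assumption|].
  apply Rle_trans with (INR (fact k) * d ^ k); [|exact hbound].
  replace (xi k * d ^ k * 2 ^ k) with (xi k * 2 ^ k * d ^ k) by ring.
  now apply Rmult_le_compat_r.
Qed.
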